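(* Let $f:D\to\{0,1\}$, $D\subseteq\{0,1\}^n$, be a non-constant $n$-bit partial Boolean function that depends on $k$ bits and can be computed exactly by a quantum 1-query algorithm. Then $\mathrm{rank}(G_f(1,0))\in\{1,\dots,n\}$, $\mathrm{rank}(G_f(1,1))\in\{1,\dots,n\}$, and $$\mathrm{rank}(G_f(1,0))+\mathrm{rank}(G_f(1,1))\le 2n+2-k.$$
   Context: An $n$-bit partial Boolean function is a map $f:D\to\{0,1\}$ with $D\subseteq\{0,1\}^n$. For $x\in\{0,1\}^n$ let $|P(x)\rangle_1=(1,x_1,\dots,x_n)^T\in\mathbb{R}^{n+1}$. For $b\in\{0,1\}$, $G_f(1,b)$ is the $(n+1)\times|\{x\in D:f(x)=b\}|$ matrix whose columns are the vectors $|P(x)\rangle_1$ for all $x\in D$ with $f(x)=b$. $f$ depends on $k$ bits if $k$ is the minimum, over all multilinear polynomials $p$ with $p(x)=f(x)$ for all $x\in D$, of the number of variables occurring in $p$. A quantum 1-query algorithm works in a finite-dimensional Hilbert space with orthonormal basis $\{|i,j'\rangle\}$, $i\in\{0,\dots,n\}$; the oracle is $O_x|i,j'\rangle=(-1)^{x_i}|i,j'\rangle$ for $i\ge1$, $O_x|0,j'\rangle=|0,j'\rangle$; the algorithm applies input-independent unitaries $U_0,O_x,U_1$ to an initial state and performs a projective measurement with outcomes in $\{0,1\}$; it computes $f$ exactly if for every $x\in D$ the outcome is $f(x)$ with probability 1. *)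

From HB Require Import structures.
From mathcomp Require Import all_boot all_order all_algebra.
From mathcomp Require Import reals complex.
Set Implicit Arguments. Unset Strict Implicit. Unset Printing Implicit Defensive.
Import Order.TTheory GRing.Theory Num.Theory.
Local Open Scope ring_scope.

(* n-bit inputs x = (x_1,...,x_n); x_i is stored at index i-1 : 'I_n. *)
Notation bits n := {ffun 'I_n -> bool}.

(* i-th entry (i in {0..n}) of |P(x)>_1 = (1, x_1, ..., x_n). *)
Definition Pvec_entry (R : ringType) (n : nat) (x : bits n) (i : 'I_n.+1) : R :=
  match unlift ord0 i with None => 1 | Some j => (x j)%:R end.

(* G_f(1,b): the (n+1) x |{x in D : f x = b}| real matrix whose columns are
   the |P(x)>_1 for x in D with f x = b (in the enumeration order of the set). *)
Definition Gf (R : realType) (n : nat) (D : {set bits n}) (f : bits n -> bool)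
  (b : bool) : 'M[R]_(n.+1, #|[set x in D | f x == b]|) :=
  \matrix_(i < n.+1, j < #|[set x in D | f x == b]|)
     Pvec_entry R (enum_val j) i.

(* Multilinear polynomials over R in x_1..x_n: coefficient c S of the
   monomial prod_{i in S} x_i. *)
Definition ml_eval (R : realType) (n : nat) (c : {set 'I_n} -> R) (x : bits n) : R :=
  \sum_(S : {set 'I_n}) c S * \prod_(i in S) (x i)%:R.

Definition ml_vars (R : realType) (n : nat) (c : {set 'I_n} -> R) : {set 'I_n} :=
  \bigcup_(S : {set 'I_n} | c S != 0) S.

Definition ml_represents (R : realType) (n : nat) (D : {set bits n})
  (f : bits n -> bool) (c : {set 'I_n} -> R) : Prop :=
  forall x, x \in D -> ml_eval c x = (f x)%:R.

(* f depends on k bits: k is the minimum, over multilinear p agreeing with f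
   on D, of the number of variables occurring in p. *)
Definition depends_on (R : realType) (n : nat) (D : {set bits n})
  (f : bits n -> bool) (k : nat) : Prop :=
  (exists c : {set 'I_n} -> R, ml_represents D f c /\ #|ml_vars c| = k) /\
  (forall c : {set 'I_n} -> R, ml_represents D f c -> (k <= #|ml_vars c|)%N).

Definition nonconstant (n : nat) (D : {set bits n}) (f : bits n -> bool) : Prop :=
  exists x y, [/\ x \in D, y \in D & f x != f y].

Section Quantum.
Variable R : realType.
Local Notation C := R[i].

Definition adj (d : nat) (A : 'M[C]_d) : 'M[C]_d := (map_mx Num.conj A)^T.

Definition unitary (d : nat) (U : 'M[C]_d) : Prop :=
  U *m adj U = 1%:M /\ adj U *m U = 1%:M.

Definition sqnorm (d : nat) (v : 'cV[C]_d) : C :=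
  \sum_(i < d) v i ord0 * (v i ord0)^*.

(* projective measurement with outcomes in {0,1} (false = 0, true = 1) *)
Definition proj_meas (d : nat) (P : bool -> 'M[C]_d) : Prop :=
  (forall b, adj (P b) = P b /\ P b *m P b = P b) /\ P false + P true = 1%:M.

(* Hilbert space with basis |i,j'>, i in {0..n}, j' in {0..m-1}; the basis
   vector |i,j'> is the coordinate with index i*m + j' in 'I_((n+1)*m).
   The oracle O_x |i,j'> = (-1)^{x_i} |i,j'> for i >= 1, identity for i = 0. *)
Definition oracle (n m : nat) (x : bits n) : 'M[C]_(n.+1 * m) :=
  \matrix_(k, l) (if k == l then
                    (if [exists j : 'I_n, (j.+1 == k %/ m)%N && x j] then -1 else 1)
                  else 0).

Definition exact_1query (n : nat) (D : {set bits n}) (f : bits n -> bool) : Prop :=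
  exists (m : nat) (psi0 : 'cV[C]_(n.+1 * m)) (U0 U1 : 'M[C]_(n.+1 * m))
         (P : bool -> 'M[C]_(n.+1 * m)),
    [/\ sqnorm psi0 = 1, unitary U0, unitary U1, proj_meas P &
     forall x, x \in D -> sqnorm (P (f x) *m (U1 *m oracle m x *m U0 *m psi0)) = 1].

End Quantum.

(* Let phi = U_0 psi_0.  The oracle acts linearly in |P(x)>_1: O_x phi = W |P(x)>_1,
   where column 0 of W is phi and column j is -2 times the part of phi lying in
   block j.  Hence the amplitude vector of outcome b is B_b |P(x)>_1 with
   B_b = P_b U_1 W, and exactness says B_{~~ f x} |P(x)>_1 = 0, ||B_{f x} |P(x)>_1|| = 1.
   - B_{~~ b} annihilates every column of G_f(1,b), so
     rank G_f(1,b) + rank B_{~~ b} <= n + 1, and both ranks are positive.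
   - The nonzero columns j >= 1 of W have disjoint supports, so they are
     independent; since a measurement splits Gram matrices,
     #(queried bits) <= rank B_0 + rank B_1.
   - ||B_1 |P(x)>_1||^2 is a multilinear polynomial in the queried bits that
     equals f on D, hence k <= #(queried bits). *)

From HB Require Import structures.
From mathcomp Require Import all_boot all_order all_algebra.
From mathcomp Require Import reals complex.
From mathcomp Require Import ring zify.
Import Order.TTheory GRing.Theory Num.Theory.
Local Open Scope ring_scope.
Set Implicit Arguments. Unset Strict Implicit. Unset Printing Implicit Defensive.

Section GramMatrices.
Variable R : realType.
Local Notation C := R[i].

Definition hc p q (A : 'M[C]_(p, q)) : 'M[C]_(q, p) := (map_mx Num.conj A)^T.

Lemma hcM p q r (A : 'M[C]_(p, q)) (B : 'M[C]_(q, r)) : hc (A *m B) = hc B *m hc A.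
Proof. by rewrite /hc map_mxM trmx_mul. Qed.

Definition gram p q (A : 'M[C]_(p, q)) : 'M[C]_q := hc A *m A.

Lemma sqnormE d (v : 'cV[C]_d) : sqnorm v = gram v 0 0.
Proof. by rewrite /sqnorm mxE; apply: eq_bigr => i _; rewrite !mxE mulrC. Qed.

Lemma sqnorm0 d : sqnorm (0 : 'cV[C]_d) = 0.
Proof. by rewrite /sqnorm big1 // => i _; rewrite mxE mul0r. Qed.

Lemma sqnorm_eq0 d (v : 'cV[C]_d) : sqnorm v = 0 -> v = 0.
Proof.
move=> /eqP; rewrite /sqnorm psumr_eq0; last by move=> i _; exact: mul_conjC_ge0.
move=> /allP v0; apply/matrixP=> i j; rewrite (ord1 j) !mxE.
by apply/eqP; rewrite -mul_conjC_eq0; apply/eqP/eqP/v0; rewrite mem_index_enum.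
Qed.

Lemma gram_unitary d q (U : 'M[C]_d) (A : 'M[C]_(d, q)) :
  unitary U -> gram (U *m A) = gram A.
Proof. by case=> _ UU1; rewrite /gram hcM -mulmxA (mulmxA (hc U)) UU1 mul1mx. Qed.

Lemma gram_measurement d q (P : bool -> 'M[C]_d) (A : 'M[C]_(d, q)) :
  proj_meas P -> gram (P false *m A) + gram (P true *m A) = gram A.
Proof.
case=> Pproj Psum.
have gramP b : gram (P b *m A) = hc A *m P b *m A.
  have [Pherm Pidem] := Pproj b.
  by rewrite /gram hcM [hc (P b)]Pherm -!mulmxA (mulmxA (P b)) Pidem.
by rewrite !gramP -mulmxDl -mulmxDr Psum mulmx1.
Qed.

End GramMatrices.

Section OracleQuery.
Variables (R : realType) (n m : nat).
Local Notation C := R[i].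
Local Notation dim := (n.+1 * m)%N.

Definition Pcol (x : bits n) : 'cV[C]_(n.+1) := \col_i Pvec_entry C x i.

Definition oracle_sign (x : bits n) (k : 'I_dim) : C :=
  if [exists j : 'I_n, (j.+1 == k %/ m)%N && x j] then -1 else 1.

(* The oracle is diagonal with entries +-1, so it preserves squared norms. *)
Lemma oracle_mul (x : bits n) (v : 'cV[C]_dim) k :
  (oracle R m x *m v) k 0 = oracle_sign x k * v k 0.
Proof.
rewrite mxE (bigD1 k) //= big1 ?addr0; first by rewrite mxE eqxx.
by move=> l /negbTE kl; rewrite mxE eq_sym kl mul0r.
Qed.

Lemma sqnorm_oracle (x : bits n) (v : 'cV[C]_dim) :
  sqnorm (oracle R m x *m v) = sqnorm v.
Proof.
apply: eq_bigr => k _; rewrite !oracle_mul rmorphM /= mulrACA.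
by rewrite /oracle_sign; case: ifP => _; rewrite ?rmorphN rmorph1 ?mulrNN mulr1 mul1r.
Qed.

(* The oracle acts linearly in |P(x)>_1: O_x phi = W phi |P(x)>_1, where column 0
   of W phi is phi and column j+1 is -2 times the part of phi in block j+1. *)
Definition query_matrix (phi : 'cV[C]_dim) : 'M[C]_(dim, n.+1) :=
  \matrix_(k, i) (if i == ord0 then phi k 0
                  else if (k %/ m == i)%N then -2 * phi k 0 else 0).

Definition queried_bits (phi : 'cV[C]_dim) : {set 'I_n} :=
  [set j | col (lift ord0 j) (query_matrix phi) != 0].

Lemma oracle_sign_block (x : bits n) (k : 'I_dim) (j : 'I_n) :
  (j.+1 == k %/ m)%N -> oracle_sign x k = if x j then -1 else 1.
Proof.
move=> /eqP kj; congr (if _ then _ else _); apply/existsP/idP => [[j' /andP[]]|xj].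
  by rewrite -kj => /eqP/succn_inj/val_inj ->.
by exists j; rewrite kj eqxx.
Qed.

Lemma oracle_linear (x : bits n) (phi : 'cV[C]_dim) :
  oracle R m x *m phi = query_matrix phi *m Pcol x.
Proof.
apply/matrixP=> k l; rewrite (ord1 l) oracle_mul mxE big_ord_recl /=.
rewrite !mxE eqxx /Pvec_entry unlift_none mulr1.
under eq_bigr => i _ do rewrite !mxE /Pvec_entry liftK lift0 /=.
have [j kj|noblock] := pickP (fun j : 'I_n => j.+1 == k %/ m)%N.
  rewrite (oracle_sign_block x kj) (bigD1 j) //= big1 ?addr0; last first.
    move=> i ij; case: eqP => [ki|]; last by rewrite mul0r.
    by move/eqP: kj ij; rewrite ki => /succn_inj/val_inj ->; rewrite eqxx.
  by rewrite eq_sym kj; case: (x j); rewrite /= ?mulr1 ?mulr0 ?addr0 //; ring.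
rewrite big1 ?addr0 => [|i _]; last by rewrite eq_sym noblock mul0r.
rewrite /oracle_sign; case: existsP => [[j /andP[jk _]]|_]; last by rewrite mul1r.
by rewrite noblock in jk.
Qed.

Lemma query_matrix_disjoint (phi : 'cV[C]_dim) (j j' : 'I_n) k :
  j != j' -> (query_matrix phi k (lift ord0 j))^* * query_matrix phi k (lift ord0 j') = 0.
Proof.
have lift_neq0 (i : 'I_n) : (lift ord0 i == ord0) = false.
  by rewrite eq_sym (negbTE (neq_lift _ _)).
move=> jj'; rewrite !mxE !lift_neq0.
case: eqP => [kj|_]; last by rewrite rmorph0 mul0r.
case: eqP => [kj'|_]; last by rewrite mulr0.
have : lift ord0 j = lift ord0 j' :> 'I_n.+1 by apply: val_inj; exact: etrans (esym kj) kj'.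
by move/lift_inj/eqP; rewrite (negbTE jj').
Qed.

End OracleQuery.

Section RankBounds.
Variable R : realType.
Local Notation C := R[i].

Lemma mxrankD_le p q (A B : 'M[C]_(p, q)) : (\rank (A + B)%R <= \rank A + \rank B)%N.
Proof.
have sumS := mxrankS (addmx_sub_adds (submx_refl A) (submx_refl B)).
exact: leq_trans sumS (mxrank_adds_leqif A B).1.
Qed.

Lemma rank_colsub p q r (g : 'I_r -> 'I_q) (A : 'M[C]_(p, q)) :
  (\rank (colsub g A) <= \rank A)%N.
Proof. by rewrite -[A]mulmx1 -mulmx_colsub mulmx1 mxrankM_maxl. Qed.

Lemma rank_gram_measurement d q (P : bool -> 'M[C]_d) (A : 'M[C]_(d, q)) :
  proj_meas P -> (\rank (gram A) <= \rank (P false *m A) + \rank (P true *m A))%N.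
Proof.
move=> HP; rewrite -(gram_measurement A HP).
by apply: leq_trans (mxrankD_le _ _) _; apply: leq_add; apply: mxrankM_maxr.
Qed.

Lemma rank_gram_orthogonal p q (A : 'M[C]_(p, q)) :
  (forall t t' k, t != t' -> (A k t)^* * A k t' = 0) ->
  (forall t, col t A != 0) -> \rank (gram A) = q.
Proof.
move=> orth col_nz.
have diagA : gram A = diag_mx (\row_t gram A t t).
  apply/matrixP => t t'; rewrite [RHS]mxE [in RHS]mxE.
  case: eqP => [->|/eqP tt'] //; rewrite mulr0n mxE.
  by apply: big1 => k _; rewrite !mxE orth.
rewrite diagA mxrank_unit // unitmxE det_diag unitfE.
apply/prodf_neq0 => t _; rewrite mxE; apply: contra (col_nz t) => /eqP gram0.
apply/eqP/sqnorm_eq0; rewrite sqnormE -gram0 !mxE; apply: eq_bigr => k _.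
by rewrite !mxE.
Qed.

Lemma rank_Gf_annihilated n (D : {set bits n}) f b d (N : 'M[C]_(d, n.+1)) :
  (forall x, x \in D -> f x = b -> N *m Pcol R x = 0) ->
  (\rank (Gf R D f b) + \rank N <= n.+1)%N.
Proof.
move=> N0; rewrite -(mxrank_map (real_complex R)) addnC.
apply: mulmx0_rank_max; apply/matrixP => k j.
have := enum_valP j; rewrite inE => /andP[xD /eqP fx].
have := N0 _ xD fx => /matrixP /(_ k 0); rewrite !mxE => Nx0.
apply: eq_trans Nx0; apply: eq_bigr => i _; rewrite !mxE /Pvec_entry.
by case: unlift => [l|]; rewrite ?rmorph1 ?rmorph_nat.
Qed.

(* The first row of G_f(1,b) is all ones, so it has positive rank if nonempty. *)
Lemma rank_Gf_pos n (D : {set bits n}) f b x :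
  x \in D -> f x = b -> (0 < \rank (Gf R D f b))%N.
Proof.
move=> xD fx; rewrite lt0n mxrank_eq0.
have pos : (0 < #|[set x in D | f x == b]|)%N.
  by apply/card_gt0P; exists x; rewrite inE xD fx eqxx.
apply/eqP => /matrixP /(_ ord0 (Ordinal pos)); rewrite !mxE /Pvec_entry unlift_none.
by move/eqP; rewrite oner_eq0.
Qed.

Lemma queried_bits_le_rank n m (phi : 'cV[C]_(n.+1 * m)) (U : 'M[C]_(n.+1 * m))
    (P : bool -> 'M[C]_(n.+1 * m)) :
  unitary U -> proj_meas P ->
  (#|queried_bits phi| <= \rank (P false *m U *m query_matrix phi)
                          + \rank (P true *m U *m query_matrix phi))%N.
Proof.
move=> HU HP; set W := query_matrix phi.
pose g (t : 'I_#|queried_bits phi|) := lift ord0 (enum_val t).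
have -> : #|queried_bits phi| = \rank (gram (colsub g W)).
  apply/esym/rank_gram_orthogonal => [t t' k tt'|t].
    have vtt' : enum_val t != enum_val t'.
      by apply: contra tt' => /eqP/enum_val_inj ->.
    have entry s : colsub g W k s = W k (g s) by rewrite mxE.
    by rewrite !entry; exact: query_matrix_disjoint k vtt'.
  by have := enum_valP t; rewrite inE col_colsub.
rewrite -(gram_unitary _ HU); apply: leq_trans (rank_gram_measurement _ HP) _.
by apply: leq_add; rewrite mulmxA mulmx_colsub rank_colsub.
Qed.

End RankBounds.

Section MultilinearFunctions.
Variables (R : realType) (n : nat) (S : {set 'I_n}).

Definition ml_over (g : bits n -> R) : Prop :=
  exists c : {set 'I_n} -> R,
    (forall T, c T != 0 -> T \subset S) /\ forall x, ml_eval c x = g x.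

Lemma ml_over_ext g h : g =1 h -> ml_over g -> ml_over h.
Proof. by move=> gh [c [cS cg]]; exists c; split=> // x; rewrite cg gh. Qed.

Lemma monomial_bits (T : {set 'I_n}) (x : bits n) :
  \prod_(i in T) ((x i)%:R : R) = (T \subset [set i | x i])%:R.
Proof.
have [Tx|/subsetPn[i iT]] := boolP (T \subset _).
  by rewrite big1 // => i /(subsetP Tx); rewrite inE => ->.
by rewrite inE => /negbTE xi; rewrite (bigD1 i) //= xi mul0r.
Qed.

Lemma ml_over_monomial (T : {set 'I_n}) (a : R) :
  T \subset S -> ml_over (fun x => a * \prod_(i in T) (x i)%:R).
Proof.
move=> TS; exists (fun T' => if T' == T then a else 0); split.
  by move=> T'; case: (T' =P T) => [->|]; rewrite ?eqxx.
move=> x; rewrite /ml_eval (bigD1 T) //= eqxx [X in _ + X]big1 ?addr0 //.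
by move=> T' /negbTE ->; rewrite mul0r.
Qed.

Lemma ml_over_const a : ml_over (fun _ => a).
Proof.
apply: ml_over_ext (ml_over_monomial a (sub0set S)) => x.
by rewrite big_set0 mulr1.
Qed.

Lemma ml_over_var j : j \in S -> ml_over (fun x => (x j)%:R).
Proof.
rewrite -sub1set => jS; apply: ml_over_ext (ml_over_monomial 1 jS) => x.
by rewrite big_set1 mul1r.
Qed.

Lemma ml_over_add g h : ml_over g -> ml_over h -> ml_over (fun x => g x + h x).
Proof.
move=> [c [cS cg]] [d [dS dh]]; exists (fun T => c T + d T); split.
  move=> T; have [cT0|/cS //] := eqVneq (c T) 0.
  by rewrite cT0 add0r => /dS.
by move=> x; rewrite -cg -dh /ml_eval -big_split; apply: eq_bigr => T _; rewrite mulrDl.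
Qed.

(* Products stay multilinear on Boolean inputs since x_i^2 = x_i: the product
   of the monomials T and T' is the monomial T :|: T'. *)
Lemma ml_over_mul g h : ml_over g -> ml_over h -> ml_over (fun x => g x * h x).
Proof.
move=> [c [cS cg]] [d [dS dh]].
exists (fun U => \sum_T \sum_T' (T :|: T' == U)%:R * (c T * d T')); split.
  move=> U; apply: contraR => US; apply/eqP/big1 => T _; apply: big1 => T' _.
  case: eqP => [TT'U|]; last by rewrite mul0r.
  have [->|/cS TS] := eqVneq (c T) 0; first by rewrite !mul0r mulr0.
  have [->|/dS T'S] := eqVneq (d T') 0; first by rewrite !mulr0.
  by move: US; rewrite -TT'U subUset TS T'S.
move=> x; rewrite -cg -dh /ml_eval big_distrl /=.
under [RHS]eq_bigr => T _ do rewrite big_distrr /=.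
under eq_bigr => U _ do rewrite big_distrl /=.
under eq_bigr => U _ do under eq_bigr => T _ do rewrite big_distrl /=.
rewrite exchange_big /=; apply: eq_bigr => T _.
rewrite exchange_big /=; apply: eq_bigr => T' _.
rewrite (bigD1 (T :|: T')) //= [X in _ + X]big1 ?addr0; last first.
  by move=> U /negbTE; rewrite eq_sym => ->; rewrite !mul0r.
rewrite eqxx mul1r !monomial_bits subUset.
by case: (T \subset _); case: (T' \subset _); rewrite /= ?mulr1 ?mulr0 ?mul0r.
Qed.

Lemma ml_over_sum (I : finType) (F : I -> bits n -> R) :
  (forall i, ml_over (F i)) -> ml_over (fun x => \sum_i F i x).
Proof.
move=> F_ml; rewrite /index_enum; elim: (Finite.enum I) => [|i s IH].
  by apply: ml_over_ext (ml_over_const 0) => x; rewrite big_nil.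
by apply: ml_over_ext (ml_over_add (F_ml i) IH) => x; rewrite big_cons.
Qed.

Lemma ml_over_affine (a : 'I_n.+1 -> R) :
  (forall j, j \notin S -> a (lift ord0 j) = 0) ->
  ml_over (fun x => \sum_i a i * Pvec_entry R x i).
Proof.
move=> aS; apply: ml_over_sum => i; have [j ->|->] := unliftP ord0 i.
  have [jS|/aS aj0] := boolP (j \in S).
    apply: ml_over_ext (ml_over_mul (ml_over_const (a (lift ord0 j))) (ml_over_var jS)).
    by move=> x; rewrite /Pvec_entry liftK.
  by apply: ml_over_ext (ml_over_const 0) => x; rewrite aj0 mul0r.
apply: ml_over_ext (ml_over_const (a ord0)) => x.
by rewrite /Pvec_entry unlift_none mulr1.
Qed.

End MultilinearFunctions.

Section SquaredNormPolynomial.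
Variable R : realType.
Local Notation C := R[i].
Local Notation Re := (@complex.Re R).
Local Notation Im := (@complex.Im R).

Lemma Re_sum (I : finType) (F : I -> C) : Re (\sum_i F i) = \sum_i Re (F i).
Proof. exact: (raddf_sum (Re : Rcomplex R -> R)). Qed.

Lemma Im_sum (I : finType) (F : I -> C) : Im (\sum_i F i) = \sum_i Im (F i).
Proof. exact: (raddf_sum (Im : Rcomplex R -> R)). Qed.

Lemma Re_mul_conj (z : C) : Re (z * z^*) = Re z ^+ 2 + Im z ^+ 2.
Proof. by case: z => a b; simpc. Qed.

(* Entries of |P(x)>_1 are real, so they scale real and imaginary parts. *)
Lemma Re_mul_Pvec n (w : C) (x : bits n) i :
  Re (w * Pvec_entry C x i) = Re w * Pvec_entry R x i.
Proof.
rewrite /Pvec_entry; case: unlift => [j|]; last by rewrite !mulr1.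
by case: (x j); rewrite ?mulr1 ?mulr0 //; case: w.
Qed.

Lemma Im_mul_Pvec n (w : C) (x : bits n) i :
  Im (w * Pvec_entry C x i) = Im w * Pvec_entry R x i.
Proof.
rewrite /Pvec_entry; case: unlift => [j|]; last by rewrite !mulr1.
by case: (x j); rewrite ?mulr1 ?mulr0 //; case: w.
Qed.

(* The probability ||N |P(x)>_1||^2 is a degree-2 polynomial in x, hence
   multilinear in the bits whose columns of N are nonzero. *)
Lemma ml_over_sqnorm n d (S : {set 'I_n}) (N : 'M[C]_(d, n.+1)) :
  (forall j, j \notin S -> col (lift ord0 j) N = 0) ->
  ml_over S (fun x => Re (sqnorm (N *m Pcol R x))).
Proof.
move=> NS; have N0 j k : j \notin S -> N k (lift ord0 j) = 0.
  by move=> /NS /matrixP /(_ k 0); rewrite !mxE.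
pose re k x := \sum_i Re (N k i) * Pvec_entry R x i.
pose im k x := \sum_i Im (N k i) * Pvec_entry R x i.
have re_ml k : ml_over S (re k) by apply: ml_over_affine => j /N0 ->.
have im_ml k : ml_over S (im k) by apply: ml_over_affine => j /N0 ->.
have sq_ml := ml_over_sum (fun k => ml_over_add (ml_over_mul (re_ml k) (re_ml k))
                                                (ml_over_mul (im_ml k) (im_ml k))).
apply: ml_over_ext sq_ml => x /=; rewrite /sqnorm Re_sum; apply: eq_bigr => k _.
rewrite Re_mul_conj !mxE Re_sum Im_sum !expr2.
by congr (_ * _ + _ * _); apply: eq_bigr => i _; rewrite mxE ?Re_mul_Pvec ?Im_mul_Pvec.
Qed.

End SquaredNormPolynomial.

Lemma nonconstant_attains n (D : {set bits n}) (f : bits n -> bool) b :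
  nonconstant D f -> exists2 x, x \in D & f x = b.
Proof.
move=> [x0 [x1 [x0D x1D f01]]]; have [<-|fx0b] := eqVneq (f x0) b; first by exists x0.
by exists x1 => //; move: f01 fx0b; case: b (f x0) (f x1) => [] [] [].
Qed.

Lemma depends_on_le (R : realType) n (D : {set bits n}) f k (S : {set 'I_n})
    (g : bits n -> R) :
  depends_on R D f k -> ml_over S g -> {in D, forall x, g x = (f x)%:R} ->
  (k <= #|S|)%N.
Proof.
move=> [_ k_min] [c [cS cg]] gf; have c_rep : ml_represents D f c.
  by move=> x xD; rewrite cg gf.
apply: leq_trans (k_min c c_rep) (subset_leq_card _).
by apply/bigcupsP => T; apply: cS.
Qed.

Lemma exact_1query_branches (R : realType) n (D : {set bits n}) f :
  exact_1query R D f ->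
  exists m (phi : 'cV[R[i]]_(n.+1 * m)) U (P : bool -> 'M_(n.+1 * m)),
    [/\ unitary U, proj_meas P &
      forall x, x \in D ->
        sqnorm (P (f x) *m U *m query_matrix phi *m Pcol R x) = 1 /\
        P (~~ f x) *m U *m query_matrix phi *m Pcol R x = 0].
Proof.
move=> [m [psi0 [U0 [U1 [P [psi_unit HU0 HU1 HP exact]]]]]].
exists m, (U0 *m psi0), U1, P; split=> // x xD.
have out_b b : P b *m U1 *m query_matrix (U0 *m psi0) *m Pcol R x
              = P b *m (U1 *m oracle R m x *m U0 *m psi0).
  by rewrite -!mulmxA -oracle_linear.
have final_unit : sqnorm (U1 *m oracle R m x *m U0 *m psi0) = 1.
  rewrite sqnormE -!mulmxA gram_unitary // -sqnormE sqnorm_oracle.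
  by rewrite sqnormE gram_unitary // -sqnormE.
have split_prob := gram_measurement (U1 *m oracle R m x *m U0 *m psi0) HP.
move/(congr1 (fun A : 'M__ => A 0 0)): split_prob; rewrite mxE -!sqnormE final_unit.
have := exact x xD; rewrite !out_b => hit; split=> //; apply: sqnorm_eq0.
case: (f x) hit split_prob => /= -> => [|]; rewrite ?[1 + _]addrC;
  by move/(congr1 (fun t => t - 1)); rewrite addrK subrr.
Qed.

Unset Implicit Arguments.

Theorem theorem4 (R : realType) (n : nat) (D : {set {ffun 'I_n -> bool}})
  (f : {ffun 'I_n -> bool} -> bool) (k : nat) :
  nonconstant D f ->
  depends_on R D f k ->
  exact_1query R D f ->
  [/\ (1 <= \rank (Gf R D f false) <= n)%N,
      (1 <= \rank (Gf R D f true) <= n)%N &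
      (\rank (Gf R D f false) + \rank (Gf R D f true) <= 2 * n + 2 - k)%N].
Proof.
move=> f_nc f_dep /exact_1query_branches[m [phi [U [P [HU HP out]]]]].
pose B b := P b *m U *m query_matrix phi.
have rankB_pos b : (0 < \rank (B b))%N.
  have [x xD <-] := nonconstant_attains b f_nc; rewrite lt0n mxrank_eq0; apply/eqP => B0.
  by have := (out x xD).1; rewrite -/(B _) B0 mul0mx sqnorm0 => /eqP; rewrite eq_sym oner_eq0.
have rankG_pos b : (0 < \rank (Gf R D f b))%N.
  by have [x xD fx] := nonconstant_attains b f_nc; exact: rank_Gf_pos xD fx.
have rankGB b : (\rank (Gf R D f b) + \rank (B (~~ b)) <= n.+1)%N.
  by apply: rank_Gf_annihilated => x xD <-; exact: (out x xD).2.
have B_ml : ml_over (queried_bits phi) (fun x => complex.Re (sqnorm (B true *m Pcol R x))).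
  apply: ml_over_sqnorm => j; rewrite inE negbK => /eqP colj0.
  by rewrite /B colE -!mulmxA -colE colj0 !mulmx0.
have k_queried : (k <= #|queried_bits phi|)%N.
  apply: (depends_on_le f_dep B_ml) => x xD; have [] := out x xD.
  by case: (f x) => /= [-> _|_ ->]; rewrite ?sqnorm0.
have := queried_bits_le_rank phi HU HP; rewrite -/(B false) -/(B true).
have := (rankGB false, rankGB true, rankB_pos false, rankB_pos true).
have := (rankG_pos false, rankG_pos true); move: k_queried => /=.
by move=> ? [? ?] [[[? ?] ?] ?] ?; split; [apply/andP; split | apply/andP; split | ]; lia.
Qed.
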